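(* Let $X$ be a space with $|X|<\mathfrak{b}$. (a) If $X$ is absolutely strongly star-Lindelöf, then $X$ is selectively strongly star-Hurewicz. (b) If $X$ is absolutely Star-$\sigma$-cd, then $X$ satisfies $selSS^*_{cd}(\mathcal{O},\Gamma)$: for every sequence $(\mathcal{U}_n:n\in\omega)$ of open covers and every sequence $(D_n:n\in\omega)$ of dense subsets there are sets $C_n\subseteq D_n$, closed and discrete in $X$, such that every $x\in X$ lies in $St(C_n,\mathcal{U}_n)$ for all but finitely many $n$.
   Context: All spaces are regular. $St(A,\mathcal{U})=\bigcup\{U\in\mathcal{U}:U\cap A\neq\emptyset\}$. $\mathfrak{b}$ is the bounding number. $X$ is absolutely strongly star-Lindelöf if for every open cover $\mathcal{U}$ and every dense $D\subseteq X$ there is a countable $C\subseteq D$ with $St(C,\mathcal{U})=X$. $X$ is selectively strongly star-Hurewicz if for every sequence $(\mathcal{U}_n)$ of open covers and every sequence $(D_n)$ of dense subsets there are finite $F_n\subseteq D_n$ such that every $x\in X$ lies in $St(F_n,\mathcal{U}_n)$ for all but finitely many $n$. $X$ is absolutely Star-$\sigma$-cd if for every dense $D\subseteq X$ and every open cover $\mathcal{U}$ there is $K\subseteq D$ which is a countable union of closed discrete subsets of $X$ with $St(K,\mathcal{U})=X$. *)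

From HB Require Import structures.
From mathcomp Require Import all_boot all_order all_algebra.
From mathcomp Require Import all_classical all_reals all_analysis.
Set Implicit Arguments. Unset Strict Implicit. Unset Printing Implicit Defensive.
Local Open Scope classical_set_scope.
Local Open Scope card_scope.

Definition St {X : Type} (A : set X) (UU : set (set X)) : set X :=
  \bigcup_(U in [set U | UU U /\ U `&` A !=set0]) U.

Definition open_cover {X : topologicalType} (UU : set (set X)) : Prop :=
  (forall U, UU U -> open U) /\ \bigcup_(U in UU) U = setT.

Definition closed_discrete {X : topologicalType} (C : set X) : Prop :=
  closed C /\ forall x, C x -> exists U : set X, [/\ open U, U x & U `&` C = [set x]].

Definition sigma_cd {X : topologicalType} (K : set X) : Prop :=
  exists Kn : nat -> set X, (forall n, closed_discrete (Kn n)) /\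
    K = \bigcup_(n in setT) Kn n.

Definition regular_T3 (X : topologicalType) : Prop :=
  regular_space X /\ accessible_space X.

Definition le_star (f g : nat -> nat) : Prop :=
  exists N, forall n, (N <= n)%N -> (f n <= g n)%N.

Definition unbounded (F : set (nat -> nat)) : Prop :=
  ~ exists g, forall f, F f -> le_star f g.

(* |X| < b : no unbounded family of cardinality <= |X|
   (b = the least cardinality of an unbounded family) *)
Definition card_lt_b (X : Type) : Prop :=
  forall F : set (nat -> nat), unbounded F -> ~ (F #<= [set: X]).

Definition absolutely_SSL (X : topologicalType) : Prop :=
  forall (UU : set (set X)) (D : set X), open_cover UU -> dense D ->
    exists C, [/\ C `<=` D, countable C & St C UU = setT].

Definition selectively_SSH (X : topologicalType) : Prop :=
  forall (UU : nat -> set (set X)) (D : nat -> set X),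
    (forall n, open_cover (UU n)) -> (forall n, dense (D n)) ->
    exists F : nat -> set X, (forall n, F n `<=` D n /\ finite_set (F n)) /\
      forall x, exists N, forall n, (N <= n)%N -> St (F n) (UU n) x.

Definition absolutely_star_sigma_cd (X : topologicalType) : Prop :=
  forall (D : set X) (UU : set (set X)), dense D -> open_cover UU ->
    exists K, [/\ K `<=` D, sigma_cd K & St K UU = setT].

Definition selSS_cd_O_Gamma (X : topologicalType) : Prop :=
  forall (UU : nat -> set (set X)) (D : nat -> set X),
    (forall n, open_cover (UU n)) -> (forall n, dense (D n)) ->
    exists C : nat -> set X, (forall n, C n `<=` D n /\ closed_discrete (C n)) /\
      forall x, exists N, forall n, (N <= n)%N -> St (C n) (UU n) x.

From HB Require Import structures.
From mathcomp Require Import all_boot all_order all_algebra.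
From mathcomp Require Import all_classical all_reals all_analysis.
Local Open Scope classical_set_scope.
Local Open Scope card_scope.

(* Both parts of the theorem follow from one selection principle.  Suppose
   that for every n the star of some set  \bigcup_k e_n k  with respect to
   U_n is all of X, where every piece  e_n k  lies in D_n and belongs to a
   class P of sets containing set0 and closed under binary unions.  For each
   x in X choose  f_x(n)  with  x \in St (e_n (f_x n)) U_n.  Since |X| < b,
   the family {f_x : x \in X} is bounded by some g in the eventual-domination
   order, so  C_n := \bigcup_(k < g n + 1) e_n k  is in P, lies in D_n and
   its U_n-star eventually contains every x.
   (a) is the case P = finite sets: a countable set is a countable union of
       subsingletons (the fibres of an injection into nat).
   (b) is the case P = closed discrete sets, using that closed discrete sets
       are closed under finite unions. *)

Lemma St_sub {T : Type} (A B : set T) (UU : set (set T)) :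
  A `<=` B -> St A UU `<=` St B UU.
Proof.
move=> AB x [U [UUU [c [Uc Ac]]] Ux]; exists U => //; split => //.
by exists c; split => //; apply: AB.
Qed.

Lemma St_bigcup {T I : Type} (D : set I) (e : I -> set T) (UU : set (set T)) x :
  St (\bigcup_(k in D) e k) UU x -> exists2 k, D k & St (e k) UU x.
Proof.
case=> U [UUU [c [Uc [k Dk ekc]]]] Ux.
by exists k => //; exists U => //; split => //; exists c.
Qed.

Lemma card_lt_b_bounded {X : Type} (f : X -> nat -> nat) :
  card_lt_b X -> exists g, forall x, le_star (f x) g.
Proof.
move=> Xb; have /contrapT[g Hg] : ~ unbounded (range f).
  by move=> /Xb; apply; exact: card_image_le.
by exists g => x; apply: Hg; exists x.
Qed.

Lemma bigcup_ord_closed {T : Type} (P : set T -> Prop) (e : nat -> set T) m :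
  P set0 -> (forall A B, P A -> P B -> P (A `|` B)) ->
  (forall k, P (e k)) -> P (\bigcup_(k < m) e k).
Proof. by move=> P0 PU Pe; rewrite bigcup_mkord; apply: big_ind. Qed.

Lemma Gamma_selection (X : topologicalType) (P : set X -> Prop)
    (UU : nat -> set (set X)) (D : nat -> set X) :
  card_lt_b X -> P set0 -> (forall A B, P A -> P B -> P (A `|` B)) ->
  (forall n, exists e : nat -> set X, (forall k, e k `<=` D n /\ P (e k)) /\
     St (\bigcup_(k in setT) e k) (UU n) = setT) ->
  exists C : nat -> set X, (forall n, C n `<=` D n /\ P (C n)) /\
    forall x, exists N, forall n, (N <= n)%N -> St (C n) (UU n) x.
Proof.
move=> Xb P0 PU /choice[e He].
have piece n x : exists k, St (e n k) (UU n) x.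
  have [k _ Hk] : exists2 k, setT k & St (e n k) (UU n) x.
    by apply: St_bigcup; rewrite (He n).2.
  by exists k.
have /choice[f Hf] : forall x, exists f : nat -> nat,
    forall n, St (e n (f n)) (UU n) x.
  by move=> x; have /choice[fx Hfx] := piece^~ x; exists fx.
have [g Hg] := card_lt_b_bounded f Xb.
exists (fun n => \bigcup_(k < (g n).+1) e n k); split.
- move=> n; split; last by apply: bigcup_ord_closed => // k; case: (He n) => /(_ k)[].
  by move=> y [k _ ekny]; case: (He n) => /(_ k)[/(_ y ekny)].
- move=> x; have [N HN] := Hg x; exists N => n /HN fxn.
  by apply: St_sub (Hf x n) => y eny; exists (f x n) => //=; rewrite /= ltnS.
Qed.

Lemma countable_bigcup_finite {T : Type} (C : set T) :
  countable C -> exists e : nat -> set T,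
    (forall k, e k `<=` C /\ finite_set (e k)) /\ C = \bigcup_(k in setT) e k.
Proof.
move=> /countable_injP[h hinj].
exists (fun k => [set c | C c /\ h c = k]); split; last first.
  by apply/seteqP; split=> [c Cc|c [k _ []//]]; exists (h c).
move=> k; split=> [c []//|].
have [[a [Ca hak]]|noa] := pselect (exists a, C a /\ h a = k); last first.
  rewrite (_ : [set c | C c /\ h c = k] = set0) ?finite_set0 //.
  by apply/seteqP; split=> // c Hc; apply: noa; exists c.
apply: (sub_finite_set _ (finite_set1 a)) => c [Cc hck].
by apply: hinj; rewrite ?inE // hck hak.
Qed.

Section ClosedDiscrete.
Variable X : topologicalType.

Definition isolated_from (A : set X) (x : X) : Prop :=
  exists U : set X, [/\ open U, U x & U `&` A `<=` [set x]].

Lemma closed_discreteP (A : set X) :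
  closed_discrete A <-> closed A /\ forall x, isolated_from A x.
Proof.
split=> [[cA dA]|[cA iA]]; split=> // x.
- have [Ax|nAx] := pselect (A x).
    by have [U [oU Ux UA]] := dA x Ax; exists U; split=> //; rewrite UA.
  exists (~` A); split=> //; first exact: closed_openC.
  by move=> y [].
- move=> Ax; have [U [oU Ux UA]] := iA x; exists U; split=> //.
  by apply/seteqP; split=> // y ->.
Qed.

Lemma isolated_fromU (A B : set X) x :
  isolated_from A x -> isolated_from B x -> isolated_from (A `|` B) x.
Proof.
move=> [U [oU Ux UA]] [V [oV Vx VB]]; exists (U `&` V); split=> //.
  exact: openI.
by move=> y [[Uy Vy] [Ay|By]]; [apply: UA | apply: VB].
Qed.

Lemma closed_discrete0 : closed_discrete (set0 : set X).
Proof. by split=> [|x []]; exact: closed0. Qed.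

Lemma closed_discreteU (A B : set X) :
  closed_discrete A -> closed_discrete B -> closed_discrete (A `|` B).
Proof.
move=> /closed_discreteP[cA iA] /closed_discreteP[cB iB].
apply/closed_discreteP; split; first exact: closedU.
by move=> x; apply: isolated_fromU.
Qed.

End ClosedDiscrete.

Theorem mainTheorem5 (X : topologicalType) :
  regular_T3 X -> card_lt_b X ->
  (absolutely_SSL X -> selectively_SSH X) /\
  (absolutely_star_sigma_cd X -> selSS_cd_O_Gamma X).
Proof.
move=> _ Xb; split=> [SSL | SScd] UU D UUcov Ddense.
- apply: Gamma_selection => //; first by move=> A B fA fB; rewrite finite_setU.
  move=> n; have [C [CD /countable_bigcup_finite[e [eC Ce]] StC]] :=
    SSL (UU n) (D n) (UUcov n) (Ddense n).
  exists e; split; last by rewrite -Ce.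
  by move=> k; have [ekC fek] := eC k; split=> // y /ekC /CD.
- apply: Gamma_selection => //.
  + exact: closed_discrete0.
  + exact: closed_discreteU.
  move=> n; have [K [KD [e [cde Ke]] StK]] := SScd (D n) (UU n) (Ddense n) (UUcov n).
  exists e; split; last by rewrite -Ke.
  by move=> k; split=> // y eky; apply: KD; rewrite Ke; exists k.
Qed.
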